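(* Let $\mathcal C^*$ be a finite set of points in a metric space with metric $d$, and let $T=(\mathcal V,E,r)$ be a neighborhood tree with $\mathcal V\subseteq\mathcal C^*$. Rank the edges of $T$ as described in the context, let $h$ be the largest rank and $E_{\le i}$ the set of edges of rank at most $i$, $E_i$ the set of rank-$i$ edges. Let $0\le i\le h-1$ and let $\mathcal A$ be the vertex set of a connected component of $(\mathcal V,E_{\le i})$ with $r\notin\mathcal A$. Then $d(\mathcal A,\mathcal C^*\setminus\mathcal A)\ge L'/2$, where $L'$ is the length of a shortest edge in $E_{i+1}$.
   Context: A rooted tree $T=(\mathcal V,E,r)$: vertex set $\mathcal V\subseteq\mathcal C^*$, edge set $E$ forming a tree on $\mathcal V$, root $r$. $\Lambda_T(v)$ is the vertex set of the subtree rooted at $v$; $\rho_T(v)$ is the parent of $v\ne r$. $T$ is a neighborhood tree if for every $v\in\mathcal V\setminus\{r\}$, $d(v,\mathcal C^*\setminus\Lambda_T(v))=d(v,\rho_T(v))$. Here $d(\mathcal X,\mathcal Y)=\min_{a\in\mathcal X,b\in\mathcal Y}d(a,b)$. Edge ranks: edge $e=(v,v')$ has length $L_e=d(v,v')$; sort edges $e_1,\dots,e_{|\mathcal V|-1}$ by nondecreasing length; $e_1$ has rank 1; for $t\ge2$, $e_t$ has the rank of $e_{t-1}$ if $L_{e_t}\le2\sum_{s<t}L_{e_s}$, otherwise that rank plus 1. In the paper $\mathcal C^*$ is the set of client representatives. *)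

From mathcomp Require Import all_boot all_order all_algebra.
Set Implicit Arguments. Unset Strict Implicit. Unset Printing Implicit Defensive.
Import Order.TTheory GRing.Theory Num.Theory.
Local Open Scope ring_scope.

Section Defs.
Variables (R : realFieldType) (P : finType) (d : P -> P -> R).

(* d is a metric on the finite point set P (= C* ). *)
Definition is_metric : Prop :=
  [/\ forall x y, 0 <= d x y,
      forall x y, d x y = 0 <-> x = y,
      forall x y, d x y = d y x &
      forall x y z, d x z <= d x y + d y z].

(* An upper bound on all distances, used as the (irrelevant) value of the
   distance between empty sets. *)
Definition maxdist : R := \big[Num.max/0]_(x : P) \big[Num.max/0]_(y : P) d x y.

Definition setdist (X Y : {set P}) : R :=
  \big[Num.min/maxdist]_(x in X) \big[Num.min/maxdist]_(y in Y) d x y.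

(* Undirected edges are 2-element subsets of P. *)
Definition adj (E : {set {set P}}) : rel P := fun x y => [set x; y] \in E.

Definition is_rooted_tree (V : {set P}) (E : {set {set P}}) (r : P) : Prop :=
  [/\ r \in V,
      forall e, e \in E -> #|e| = 2%N /\ e \subset V,
      forall u v, u \in V -> v \in V -> connect (adj E) u v &
      #|E| = (#|V| - 1)%N].

(* Lambda_T(v): vertex set of the subtree rooted at v. For v <> r, these are
   the vertices u of V that are separated from r once the edges at v are
   removed (i.e. whose path to r goes through v). *)
Definition subtree (V : {set P}) (E : {set {set P}}) (r v : P) : {set P} :=
  if v == r then V
  else [set u in V | ~~ connect (adj [set e in E | v \notin e]) u r].

Definition is_parent (V : {set P}) (E : {set {set P}}) (r v w : P) : bool :=
  ([set v; w] \in E) && (w \notin subtree V E r v).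

Definition neighborhood_tree (V : {set P}) (E : {set {set P}}) (r : P) : Prop :=
  is_rooted_tree V E r /\
  forall v w, v \in V -> v != r -> is_parent V E r v w ->
    setdist [set v] (~: subtree V E r v) = d v w.

Definition elen (e : {set P}) : R :=
  if enum e is [:: a; b] then d a b else 0.

(* Ranks along a sequence of edges sorted by nondecreasing length. *)
Fixpoint rank_aux (sum : R) (rk : nat) (s : seq {set P}) : seq nat :=
  if s is e :: s' then
    let rk' := if elen e <= 2 * sum then rk else rk.+1 in
    rk' :: rank_aux (sum + elen e) rk' s'
  else [::].

Definition ranks (s : seq {set P}) : seq nat :=
  if s is e :: s' then 1%N :: rank_aux (elen e) 1 s' else [::].

Definition rank (s : seq {set P}) (e : {set P}) : nat := nth 0%N (ranks s) (index e s).

Definition max_rank (s : seq {set P}) : nat := \max_(e <- s) rank s e.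

Definition edges_le (s : seq {set P}) (i : nat) : {set {set P}} :=
  [set e | (e \in s) && (rank s e <= i)%N].
Definition edges_eq (s : seq {set P}) (i : nat) : {set {set P}} :=
  [set e | (e \in s) && (rank s e == i)].

Definition is_component (V : {set P}) (F : {set {set P}}) (A : {set P}) : Prop :=
  exists2 v, v \in V & A = [set u in V | connect (adj F) v u].

End Defs.

From mathcomp Require Import all_boot all_order all_algebra.
From mathcomp Require Import lra.
Import Order.TTheory GRing.Theory Num.Theory.
Local Open Scope ring_scope.

Set Implicit Arguments. Unset Strict Implicit. Unset Printing Implicit Defensive.

(* Let W be the total length of the edges of rank at most i and L the length
   of e0.  The rank only increases at an edge longer than twice all shorter
   edges together, so 2 W <= L, and every edge of rank > i has length >= L.
   Two points joined by edges of rank <= i are within distance W.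
   Let a be in A and b outside A.  The tree path from a to r leaves A through
   an edge v w of rank > i, so w is the parent of v and, by the neighborhood
   property, every point outside the subtree of v is at distance >= L from v,
   hence >= L - W >= L / 2 from a.  If b lies in the subtree of v, the path
   from b to r goes through v, so it leaves the component of b through an
   edge c w' of rank > i with a outside the subtree of c, and the same
   estimate holds with the roles of a and b exchanged. *)

Section Ranks.
Variables (R : realFieldType) (P : finType) (d : P -> P -> R).

Local Notation sorted_by_length := (sorted (fun e f => elen d e <= elen d f)).

Definition rank_weight (s : seq {set P}) (rs : seq nat) (k : nat) : R :=
  \sum_(p <- zip s rs | (p.2 <= k)%N) elen d p.1.

Lemma size_rank_aux sum rk s : size (rank_aux d sum rk s) = size s.
Proof. by elim: s sum rk => //= e s IH sum rk; rewrite IH. Qed.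

Lemma size_ranks s : size (ranks d s) = size s.
Proof. by case: s => //= e s; rewrite size_rank_aux. Qed.

Lemma rank_aux_ge sum rk s r : r \in rank_aux d sum rk s -> (rk <= r)%N.
Proof.
elim: s sum rk => //= e s IH sum rk.
have rk_le : (rk <= if (elen d e <= 2 * sum)%R then rk else rk.+1)%N by case: ifP.
by rewrite inE => /orP[/eqP -> //| /IH]; apply: leq_trans.
Qed.

Lemma mem_zip_rank_aux sum rk s e r :
  (e, r) \in zip s (rank_aux d sum rk s) -> e \in s /\ (rk <= r)%N.
Proof.
move=> er_in; have same_size := size_rank_aux sum rk s; split.
  by rewrite -(unzip1_zip (eq_leq (esym same_size))); apply/mapP; exists (e, r).
apply: (@rank_aux_ge sum rk s); rewrite -(unzip2_zip (eq_leq same_size)).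
by apply/mapP; exists (e, r).
Qed.

Lemma rank_weight_below sum rk s k :
  (k < rk)%N -> rank_weight s (rank_aux d sum rk s) k = 0.
Proof.
move=> k_lt; rewrite /rank_weight big1_seq // => -[e r] /= /andP[r_le /mem_zip_rank_aux[_ rk_le]].
by move: (leq_trans rk_le r_le); rewrite leqNgt k_lt.
Qed.

(* The rank passes [k] only at an edge longer than twice everything before it,
   and the edges of rank at most [k] all come before that edge. *)
Lemma rank_aux_jump sum rk k s e r :
  sorted_by_length s -> (rk <= k)%N ->
  (e, r) \in zip s (rank_aux d sum rk s) -> (k < r)%N ->
  2 * (sum + rank_weight s (rank_aux d sum rk s) k) < elen d e.
Proof.
elim: s sum rk => //= e1 s IH sum rk s_sorted rk_le_k.
set rk' := if elen d e1 <= 2 * sum then rk else rk.+1.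
have jump : (k < rk')%N -> 2 * sum < elen d e1.
  by rewrite /rk'; case: ifP => [_|/negbT]; [rewrite ltnNge rk_le_k | rewrite -ltNge].
have tail_sorted := path_sorted s_sorted.
rewrite /rank_weight big_cons /= -/(rank_weight _ _ _) inE.
case: (leqP rk' k) => [rk'_le | k_lt].
  case/orP=> [/eqP[_ ->]|er_in]; first by rewrite ltnNge rk'_le.
  by move=> k_lt_r; rewrite addrA; apply: IH.
rewrite rank_weight_below // addr0 => /orP[/eqP[-> _]|er_in] _.
  exact: jump.
apply: (lt_le_trans (jump k_lt)).
have [e_in _] := mem_zip_rank_aux er_in.
have /allP := order_path_min (fun x y z => @le_trans _ _ (elen d x) (elen d y) (elen d z)) s_sorted.
exact.
Qed.

Hypothesis elen_nonneg : forall e, 0 <= elen d e.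

Lemma ranks_gap s k e r :
  sorted_by_length s ->
  (e, r) \in zip s (ranks d s) -> (k < r)%N ->
  2 * rank_weight s (ranks d s) k <= elen d e.
Proof.
case: s => // e1 s s_sorted; rewrite /ranks /rank_weight big_cons /=.
rewrite -/(rank_weight _ _ _) inE.
case: k => [|k].
  by rewrite rank_weight_below // mulr0 => _ _; apply: elen_nonneg.
case/orP=> [/eqP[_ ->] //| er_in k_lt_r].
exact/ltW/(rank_aux_jump (path_sorted s_sorted) _ er_in).
Qed.

Lemma zip_ranks s : uniq s -> zip s (ranks d s) = [seq (e, rank d s e) | e <- s].
Proof.
move=> s_uniq; apply: (@eq_from_nth _ (set0, 0%N)).
  by rewrite size_zip size_ranks size_map minnn.
move=> j; rewrite size_zip size_ranks minnn => j_lt.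
by rewrite nth_zip ?size_ranks // (nth_map set0) // /rank index_uniq.
Qed.

Lemma edges_le_weight s i : uniq s ->
  \sum_(e in edges_le d s i) elen d e = rank_weight s (ranks d s) i.
Proof.
move=> s_uniq; rewrite /rank_weight zip_ranks // big_map -big_filter.
rewrite big_uniq ?filter_uniq //; apply: eq_bigl => e.
by rewrite inE mem_filter andbC.
Qed.

Lemma edges_le_gap s i e :
  uniq s -> sorted_by_length s -> e \in s -> (i < rank d s e)%N ->
  2 * \sum_(f in edges_le d s i) elen d f <= elen d e.
Proof.
move=> s_uniq s_sorted e_in i_lt; rewrite edges_le_weight //.
by apply: (ranks_gap s_sorted _ i_lt); rewrite zip_ranks //; apply: map_f.
Qed.

Lemma edges_le_long s i e0 e :
  uniq s -> sorted_by_length s -> e0 \in edges_eq d s i.+1 ->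
  (forall f, f \in edges_eq d s i.+1 -> elen d e0 <= elen d f) ->
  e \in s -> e \notin edges_le d s i -> elen d e0 <= elen d e.
Proof.
move=> s_uniq s_sorted e0_eq e0_min e_in.
move: (e0_eq); rewrite inE => /andP[e0_in /eqP e0_rank].
rewrite inE e_in -ltnNge /= => i_lt.
have [e_rank|e_rank] := eqVneq (rank d s e) i.+1.
  by apply: e0_min; rewrite inE e_in e_rank eqxx.
have e0_le_W : elen d e0 <= \sum_(f in edges_le d s i.+1) elen d f.
  rewrite (bigD1 e0) /=; last by rewrite inE e0_in e0_rank leqnn.
  by rewrite lerDl sumr_ge0.
have := edges_le_gap s_uniq s_sorted e_in (_ : i.+1 < rank d s e)%N.
have := elen_nonneg e0; rewrite ltn_neqAle eq_sym e_rank i_lt; lra.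
Qed.

End Ranks.

Lemma ler_psum_sub (R : numDomainType) (I : finType) (P1 P2 : pred I) (F : I -> R) :
  (forall i, P1 i -> P2 i) -> (forall i, P2 i -> 0 <= F i) ->
  \sum_(i | P1 i) F i <= \sum_(i | P2 i) F i.
Proof.
move=> P12 F_ge0; rewrite [leLHS]big_mkcond [leRHS]big_mkcond /=.
by apply: ler_sum => i _; case: ifP => [/P12 -> //|_]; case: ifP => // /F_ge0.
Qed.

Section Graphs.
Variable P : finType.
Implicit Types (E F : {set {set P}}) (c x y z : P) (p : seq P).

Definition edges_avoiding E c : {set {set P}} := [set e in E | c \notin e].

(* When [E] is a tree, [w] is then the parent of [c] for the root [r]. *)
Definition exit_edge F E r c w : Prop :=
  [/\ adj E c w, ~~ adj F c w, c != r & connect (adj (edges_avoiding E c)) w r].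

Lemma adj_sym E : symmetric (adj E).
Proof. by move=> x y; rewrite /adj setUC. Qed.

Lemma connect_uniq_path (e : rel P) x y :
  connect e x y -> exists p, [/\ uniq (x :: p), path e x p & last x p = y].
Proof. by move=> /connectP[p /shortenP[q q_path q_uniq _] ->]; exists q. Qed.

Lemma path_edges_avoiding E c x p :
  c \notin x :: p -> path (adj E) x p -> path (adj (edges_avoiding E c)) x p.
Proof.
move=> c_notin; apply: (sub_in_path (P := [pred z | z != c])).
  by move=> u v /= uc vc; rewrite /adj inE in_set2 !(eq_sym c) (negPf uc) (negPf vc) andbT.
by apply/allP => z z_in; apply: contraNneq c_notin => <-.
Qed.

Lemma connect_edges_avoiding_last E c x p z :
  c \notin x :: p -> path (adj E) x p -> z \in x :: p ->
  connect (adj (edges_avoiding E c)) z (last x p).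
Proof.
move=> c_notin /(path_edges_avoiding c_notin) avoiding_path z_in.
apply: connect_trans (path_connect avoiding_path (mem_last x p)).
by rewrite (sym_connect_sym (adj_sym _)) (path_connect avoiding_path z_in).
Qed.

Lemma connect_edges_avoiding F E c x y :
  F \subset E -> ~~ connect (adj F) x c -> connect (adj F) x y ->
  connect (adj (edges_avoiding E c)) x y.
Proof.
move=> F_sub x_not_c /connectP[p p_path ->].
have c_notin : c \notin x :: p.
  by apply: contraNN x_not_c => c_in; apply: (path_connect p_path c_in).
apply: connect_edges_avoiding_last c_notin _ (mem_head x p).
by apply: sub_path p_path => u v; apply: (subsetP F_sub).
Qed.

Lemma exists_exit_edge F E x p y :
  uniq (x :: p) -> path (adj E) x p -> y \in x :: p -> ~~ connect (adj F) x y ->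
  exists c w, [/\ connect (adj F) x c, exit_edge F E (last x p) c w &
                  connect (adj (edges_avoiding E c)) y (last x p)].
Proof.
elim: p x => [|z p IH] x x_uniq path_xp y_in x_not_y.
  by move: y_in x_not_y; rewrite inE => /eqP ->; rewrite connect0.
have y_in_zp : y \in z :: p.
  by move: y_in; rewrite inE => /orP[/eqP y_x|//]; rewrite y_x connect0 in x_not_y.
move: x_uniq path_xp => /= /andP[x_notin zp_uniq] /andP[E_xz path_zp].
case F_xz: (adj F x z).
  have z_not_y : ~~ connect (adj F) z y.
    exact: contraNN (connect_trans (connect1 F_xz)) x_not_y.
  have [c [w [z_c exit_cw y_r]]] := IH z zp_uniq path_zp y_in_zp z_not_y.
  by exists c, w; split=> //; apply: connect_trans (connect1 F_xz) z_c.
exists x, z; split; rewrite ?connect0 //.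
  split; rewrite ?F_xz //.
    by apply: contraNneq x_notin => ->; apply: mem_last.
  exact: connect_edges_avoiding_last x_notin path_zp (mem_head z p).
exact: connect_edges_avoiding_last x_notin path_zp y_in_zp.
Qed.

Lemma notin_subtree V E r c z :
  c != r -> connect (adj (edges_avoiding E c)) z r -> z \notin subtree V E r c.
Proof. by move=> c_r z_r; rewrite /subtree (negPf c_r) inE z_r andbF. Qed.

Lemma mem_path_subtree V E r c b p :
  c != r -> b \in subtree V E r c -> path (adj E) b p -> last b p = r -> c \in b :: p.
Proof.
move=> c_r b_in b_path b_last; apply: contraTT b_in => c_notin.
apply: notin_subtree c_r _; rewrite -b_last.
exact: connect_edges_avoiding_last c_notin b_path (mem_head b p).
Qed.

End Graphs.

Section Metric.
Variables (R : realFieldType) (P : finType) (d : P -> P -> R).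
Hypothesis d_metric : is_metric d.

Lemma elen_ge0 e : 0 <= elen d e.
Proof. by case: d_metric => d_ge0 _ _ _; rewrite /elen; case: (enum e) => [|a [|b [|]]]. Qed.

Lemma elen_pair x y : x != y -> elen d [set x; y] = d x y.
Proof.
case: d_metric => _ _ d_sym _ xy.
have mem_xy z : (z \in enum [set x; y]) = (z == x) || (z == y) by rewrite mem_enum in_set2.
have := enum_uniq [set x; y]; have : size (enum [set x; y]) = 2%N by rewrite -cardE cards2 xy.
rewrite /elen; case: (enum _) mem_xy => [|a [|b [|]]] // mem_xy _ /=.
rewrite inE andbT => ab; have := mem_xy a; have := mem_xy b; rewrite !inE !eqxx orbT /=.
move=> /esym/orP[]/eqP b_eq /esym/orP[]/eqP a_eq; rewrite a_eq b_eq in ab *.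
- by rewrite eqxx in ab.
- exact: d_sym.
- by [].
- by rewrite eqxx in ab.
Qed.

Lemma dist_le_maxdist x y : d x y <= maxdist d.
Proof. exact: le_trans (le_bigmax _ _ y) (le_bigmax _ _ x). Qed.

Lemma elen_le_maxdist e : elen d e <= maxdist d.
Proof.
rewrite /elen; case: (enum e) => [|a [|b [|? ?]]]; rewrite ?dist_le_maxdist //;
  by rewrite /maxdist bigmax_ge_id.
Qed.

Lemma setdist1_le c (X : {set P}) z : z \in X -> setdist d [set c] X <= d c z.
Proof.
move=> z_in; apply: le_trans (bigmin_le_cond _ _ (set11 c)) _.
exact: bigmin_le_cond.
Qed.

Lemma le_setdist (X Y : {set P}) m :
  m <= maxdist d -> (forall x y, x \in X -> y \in Y -> m <= d x y) ->
  m <= setdist d X Y.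
Proof.
move=> m_le m_le_d; apply: le_bigmin => // x x_in.
by apply: le_bigmin => // y y_in; apply: m_le_d.
Qed.

Lemma dist_le_path_weight (F : {set {set P}}) x p :
  uniq (x :: p) -> path (adj F) x p ->
  d x (last x p) <= \sum_(e in F | e \subset [set:: x :: p]) elen d e.
Proof.
have [_ d_eq0 _ d_tri] := d_metric.
elim: p x => [|y p IH] x /=.
  by move=> _ _; rewrite (iffRL (d_eq0 x x)) // sumr_ge0 // => e _; apply: elen_ge0.
move=> /andP[x_notin yp_uniq] /andP[F_xy yp_path].
have xy : x != y by apply: contraNneq x_notin => ->; apply: mem_head.
apply: le_trans (d_tri x y _) _.
rewrite (bigD1 [set x; y]) /=; last first.
  by apply/andP; split=> //; apply/subsetP => z; rewrite !inE => /orP[] ->; rewrite ?orbT.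
rewrite -(elen_pair xy) lerD2l; apply: le_trans (IH y yp_uniq yp_path) _.
apply: ler_psum_sub => [e /andP[F_e e_sub]|e _]; last exact: elen_ge0.
rewrite F_e; apply/andP; split.
  by apply: subset_trans e_sub _; apply/subsetP => z; rewrite !inE => ->; rewrite orbT.
apply: contraNneq x_notin => e_xy.
have x_in_e : x \in e by rewrite e_xy set21.
by have := subsetP e_sub x x_in_e; rewrite inE.
Qed.

Lemma dist_le_weight (F : {set {set P}}) x y :
  connect (adj F) x y -> d x y <= \sum_(e in F) elen d e.
Proof.
move=> /connect_uniq_path[p [p_uniq p_path <-]].
apply: le_trans (dist_le_path_weight p_uniq p_path) _.
by apply: ler_psum_sub => [e /andP[]|e _] //; apply: elen_ge0.
Qed.

End Metric.

Section Separation.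
Variables (R : realFieldType) (P : finType) (d : P -> P -> R).
Variables (V : {set P}) (E F : {set {set P}}) (r : P) (L : R).
Hypotheses (d_metric : is_metric d) (nbhd : neighborhood_tree d V E r).
Hypotheses (F_sub : F \subset E) (long : forall e, e \in E -> e \notin F -> L <= elen d e).

Local Notation W := (\sum_(e in F) elen d e).

Lemma exit_edge_far c w z :
  exit_edge F E r c w -> z \notin subtree V E r c -> L <= d c z.
Proof.
have [[_ E_edges _ _] nbhd_dist] := nbhd.
move=> [E_cw F_cw c_r w_r] z_out.
have [cw_card cw_sub] := E_edges _ E_cw.
have c_V : c \in V by apply: (subsetP cw_sub); apply: set21.
have c_w : c != w by move: cw_card; rewrite cards2; case: (c != w).
have parent : is_parent V E r c w by apply/andP; split; last exact: notin_subtree.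
apply: (@le_trans _ _ (d c w)); first by rewrite -(elen_pair d_metric c_w); apply: long.
by rewrite -(nbhd_dist c w c_V c_r parent); apply: setdist1_le; rewrite inE.
Qed.

Lemma exit_edge_dist x c w z :
  connect (adj F) x c -> exit_edge F E r c w -> z \notin subtree V E r c ->
  L - W <= d x z.
Proof.
move=> x_c exit_cw z_out; have [_ _ d_sym d_tri] := d_metric.
have := dist_le_weight d_metric x_c; have := exit_edge_far exit_cw z_out.
have := d_tri c x z; rewrite (d_sym c x); lra.
Qed.

Lemma exit_component_dist a b :
  a \in V -> ~~ connect (adj F) a r -> (b \in V -> ~~ connect (adj F) a b) ->
  L - W <= d a b.
Proof.
move=> a_V a_r a_b.
have [[r_V _ tree_conn _] _] := nbhd.
have F_sym := sym_connect_sym (adj_sym F).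
have [p [p_uniq p_path p_last]] := connect_uniq_path (tree_conn a r a_V r_V).
have := exists_exit_edge p_uniq p_path (mem_last a p).
rewrite p_last => /(_ F a_r) [v [w [a_v exit_vw _]]].
have [b_sub|b_out] := boolP (b \in subtree V E r v); last exact: exit_edge_dist a_v exit_vw b_out.
have [_ _ v_r _] := exit_vw.
have b_V : b \in V by move: b_sub; rewrite /subtree (negPf v_r) inE => /andP[].
have [q [q_uniq q_path q_last]] := connect_uniq_path (tree_conn b r b_V r_V).
have b_v : ~~ connect (adj F) b v.
  by apply: contra (a_b b_V) => b_v; rewrite (connect_trans a_v) // F_sym.
have := exists_exit_edge q_uniq q_path (mem_path_subtree v_r b_sub q_path q_last).
rewrite q_last => /(_ F b_v) [c [w' [b_c exit_cw' v_r_avoiding_c]]].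
have [_ _ c_r _] := exit_cw'.
have a_c : ~~ connect (adj F) a c.
  by apply: contra (a_b b_V) => a_c; rewrite (connect_trans a_c) // F_sym.
have a_out : a \notin subtree V E r c.
  exact: notin_subtree c_r (connect_trans (connect_edges_avoiding F_sub a_c a_v) v_r_avoiding_c).
by have [_ _ d_sym _] := d_metric; rewrite d_sym; apply: exit_edge_dist b_c exit_cw' a_out.
Qed.

End Separation.

Theorem claim4 (R : realFieldType) (P : finType) (d : P -> P -> R)
  (V : {set P}) (E : {set {set P}}) (r : P)
  (s : seq {set P}) (i : nat) (A : {set P}) (e0 : {set P}) :
  is_metric d ->
  neighborhood_tree d V E r ->
  perm_eq s (enum E) ->
  sorted (fun e f => elen d e <= elen d f) s ->
  (i < max_rank d s)%N ->
  is_component V (edges_le d s i) A ->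
  r \notin A ->
  e0 \in edges_eq d s i.+1 ->
  (forall e, e \in edges_eq d s i.+1 -> elen d e0 <= elen d e) ->
  elen d e0 / 2 <= setdist d A (~: A).
Proof.
(* [i < max_rank d s] only ensures that E_(i+1) is nonempty, which [e0]
   already witnesses. *)
move=> d_metric nbhd s_perm s_sorted _ [v0 v0_V A_def] r_notin e0_eq e0_min.
set F := edges_le d s i; set L := elen d e0.
have s_uniq : uniq s by rewrite (perm_uniq s_perm) enum_uniq.
have mem_s e : (e \in s) = (e \in E) by rewrite (perm_mem s_perm) mem_enum.
have F_sub : F \subset E by apply/subsetP => e; rewrite inE mem_s => /andP[].
have gap : 2 * \sum_(e in F) elen d e <= L.
  move: (e0_eq); rewrite inE => /andP[e0_in /eqP e0_rank].
  by apply: (edges_le_gap (elen_ge0 d_metric) s_uniq s_sorted e0_in); rewrite e0_rank.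
have long e : e \in E -> e \notin F -> L <= elen d e.
  by rewrite -mem_s; apply: (edges_le_long (elen_ge0 d_metric) s_uniq s_sorted e0_eq e0_min).
have L_ge0 : 0 <= L := elen_ge0 d_metric e0.
apply: le_setdist => [|a b]; first by apply: (@le_trans _ _ L); [lra | exact: elen_le_maxdist].
rewrite A_def !inE => /andP[a_V v0_a] b_out.
have [[r_V _ _ _] _] := nbhd.
have a_r : ~~ connect (adj F) a r.
  by apply: contra r_notin => a_r; rewrite A_def inE r_V (connect_trans v0_a a_r).
have a_b : b \in V -> ~~ connect (adj F) a b.
  by move=> b_V; apply: contra b_out => a_b; rewrite b_V (connect_trans v0_a a_b).
have := exit_component_dist d_metric nbhd F_sub long a_V a_r a_b; lra.
Qed.
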